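(* Suppose that $\xi,\eta:G_+\rightarrow G_-$ are two group homomorphisms, and that $r:G_+\times G_+\rightarrow \mathbf{R}^{>0}$ is a function such that for all $u,v,w\in G_+$: $$\,^v\xi(u) = \xi(^{\eta(v)}u),\qquad \eta(v)^u = \eta(v^{\xi(u)}),$$ $$r(uw,v) = r(u,v)\,r(w,v^{\xi(u)}),\qquad r(u,wv) = r(u,v)\,r(^{\eta(v)}u,w).$$ Then $$R=\sum_{u,v\in G_+}r(u,v)\,\{u\left(\eta(v)^{u}\right)^{-1}\}\otimes \{v\xi(u)\}\in H(G;G_+,G_-)\otimes H(G;G_+,G_-)$$ satisfies $(\Delta \otimes id)R = R_{13}R_{23}$ and $(id \otimes \Delta) R = R_{13}R_{12}$. Conversely, if $R\in H(G;G_+,G_-)\otimes H(G;G_+,G_-)$ is invertible, positive, satisfies $(\Delta \otimes id)R = R_{13}R_{23}$ and $(id \otimes \Delta) R = R_{13}R_{12}$, and $R^{-1}$ is also positive, then there exist group homomorphisms $\xi,\eta:G_+\to G_-$ and a function $r:G_+\times G_+\to\mathbf{R}^{>0}$ satisfying the four identities above such that $R=\sum_{u,v\in G_+}r(u,v)\,\{u\left(\eta(v)^{u}\right)^{-1}\}\otimes \{v\xi(u)\}$.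
   Context: $G$ is a finite group with a unique factorization $G=G_+G_-$ (subgroups $G_+,G_-$ such that every $g\in G$ is uniquely $g=g_+g_-$ with $g_\pm\in G_\pm$; also uniquely $g=\bar g_-\bar g_+$). The induced mutual actions are defined by $g_+g_-=\left(^{g_+}g_-\right)\left(g_+^{\,g_-}\right)$ and $g_-g_+=\left(^{g_-}g_+\right)\left(g_-^{\,g_+}\right)$ (left/right actions of $G_+$ and $G_-$ on each other). $H(G;G_+,G_-)$ is the Hopf algebra with basis $\{g\}$, $g\in G$, multiplication $\{g\}\{h\}=\delta_{g_+^{g_-},h_+}\{gh_-\}$, unit $1=\sum_{g_+\in G_+}\{g_+\}$, comultiplication $\Delta\{g\}=\sum_{h_+\in G_+}\{g_+h_+^{-1}(^{h_+}g_-)\}\otimes\{h_+g_-\}$, counit $\epsilon\{g\}=\delta_{g_+,e}$, antipode $S\{g\}=\{g^{-1}\}$. An element of $H\otimes H$ is positive if it is a non-negative linear combination of the $\{g\}\otimes\{h\}$. *)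

(* G is the whole finite group gT; G+ = Gp, G- = Gm. *)
From HB Require Import structures.
From mathcomp Require Import all_boot all_order all_algebra all_fingroup.
From mathcomp Require Import reals.
Set Implicit Arguments.
Unset Strict Implicit.
Unset Printing Implicit Defensive.
Import GRing.Theory Num.Theory.

Definition uniq_fact (gT : finGroupType) (Gp Gm : {set gT}) : Prop :=
  forall g : gT, exists! p : gT * gT,
    [/\ p.1 \in Gp, p.2 \in Gm & g = (p.1 * p.2)%g].

Definition fplus (gT : finGroupType) (Gp Gm : {set gT}) (g : gT) : gT :=
  odflt 1%g [pick a in Gp | (a^-1 * g)%g \in Gm].
Definition fminus (gT : finGroupType) (Gp Gm : {set gT}) (g : gT) : gT :=
  ((fplus Gp Gm g)^-1 * g)%g.
Definition bplus (gT : finGroupType) (Gp Gm : {set gT}) (g : gT) : gT :=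
  odflt 1%g [pick a in Gp | (g * a^-1)%g \in Gm].
Definition bminus (gT : finGroupType) (Gp Gm : {set gT}) (g : gT) : gT :=
  (g * (bplus Gp Gm g)^-1)%g.

(* Mutual actions: for u in G+, x in G-,
   u x = (^u x)(u^x)   and   x u = (^x u)(x^u). *)
Definition lactPM (gT : finGroupType) (Gp Gm : {set gT}) (u x : gT) : gT :=
  bminus Gp Gm (u * x)%g.
Definition ractMP (gT : finGroupType) (Gp Gm : {set gT}) (u x : gT) : gT :=
  bplus Gp Gm (u * x)%g.
Definition lactMP (gT : finGroupType) (Gp Gm : {set gT}) (x u : gT) : gT :=
  fplus Gp Gm (x * u)%g.
Definition ractPM (gT : finGroupType) (Gp Gm : {set gT}) (x u : gT) : gT :=
  fminus Gp Gm (x * u)%g.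

(* Elements of H, H (x) H, H (x) H (x) H as coefficient functions on the
   basis {g}, {g}(x){h}, {g}(x){h}(x){k}. *)
Definition H2 (gT : finGroupType) (R : realType) := {ffun gT * gT -> R}.
Definition H3 (gT : finGroupType) (R : realType) := {ffun gT * gT * gT -> R}.

(* basis product: {g}{h} = [g+^{g-} == h+] {g h-}; bmul g h k <-> coefficient
   of {k} in {g}{h} is 1 *)
Definition bmul (gT : finGroupType) (Gp Gm : {set gT}) (g h k : gT) : bool :=
  (bplus Gp Gm g == fplus Gp Gm h) && ((g * fminus Gp Gm h)%g == k).

Local Open Scope ring_scope.

(* unit 1 (x) 1 of H (x) H, with 1 = sum_{u in G+} {u} *)
Definition one2 (gT : finGroupType) (R : realType) (Gp : {set gT}) : H2 gT R :=
  [ffun k => ((k.1 \in Gp) && (k.2 \in Gp))%:R].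

Definition mul2 (gT : finGroupType) (R : realType) (Gp Gm : {set gT})
  (A B : H2 gT R) : H2 gT R :=
  [ffun k => \sum_(x : gT * gT) \sum_(y : gT * gT)
     A x * B y * (bmul Gp Gm x.1 y.1 k.1 && bmul Gp Gm x.2 y.2 k.2)%:R].

Definition mul3 (gT : finGroupType) (R : realType) (Gp Gm : {set gT})
  (A B : H3 gT R) : H3 gT R :=
  [ffun k => \sum_(x : gT * gT * gT) \sum_(y : gT * gT * gT)
     A x * B y * [&& bmul Gp Gm x.1.1 y.1.1 k.1.1,
                     bmul Gp Gm x.1.2 y.1.2 k.1.2 &
                     bmul Gp Gm x.2 y.2 k.2]%:R].

(* coefficient of {k1} (x) {k2} in Delta {g}
   = sum_{h in G+} {g+ h^-1 (^h g-)} (x) {h g-} *)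
Definition dcoef (gT : finGroupType) (R : realType) (Gp Gm : {set gT})
  (g k1 k2 : gT) : R :=
  \sum_(h in Gp)
    ((k1 == (fplus Gp Gm g * h^-1 * lactPM Gp Gm h (fminus Gp Gm g))%g)
     && (k2 == (h * fminus Gp Gm g)%g))%:R.

Definition Delta_id (gT : finGroupType) (R : realType) (Gp Gm : {set gT})
  (A : H2 gT R) : H3 gT R :=
  [ffun k => \sum_(x : gT * gT)
     A x * dcoef R Gp Gm x.1 k.1.1 k.1.2 * (x.2 == k.2)%:R].

Definition id_Delta (gT : finGroupType) (R : realType) (Gp Gm : {set gT})
  (A : H2 gT R) : H3 gT R :=
  [ffun k => \sum_(x : gT * gT)
     A x * (x.1 == k.1.1)%:R * dcoef R Gp Gm x.2 k.1.2 k.2].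

Definition leg13 (gT : finGroupType) (R : realType) (Gp : {set gT})
  (A : H2 gT R) : H3 gT R :=
  [ffun k => A (k.1.1, k.2) * (k.1.2 \in Gp)%:R].
Definition leg23 (gT : finGroupType) (R : realType) (Gp : {set gT})
  (A : H2 gT R) : H3 gT R :=
  [ffun k => (k.1.1 \in Gp)%:R * A (k.1.2, k.2)].
Definition leg12 (gT : finGroupType) (R : realType) (Gp : {set gT})
  (A : H2 gT R) : H3 gT R :=
  [ffun k => A k.1 * (k.2 \in Gp)%:R].

Definition positive2 (gT : finGroupType) (R : realType) (A : H2 gT R) : Prop :=
  forall k, 0 <= A k.

Definition Rform (gT : finGroupType) (R : realType) (Gp Gm : {set gT})
  (xi eta : gT -> gT) (r : gT -> gT -> R) : H2 gT R :=
  [ffun k => \sum_(u in Gp) \sum_(v in Gp)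
     r u v * (k == ((u * (ractPM Gp Gm (eta v) u)^-1)%g, (v * xi u)%g))%:R].

Definition compat (gT : finGroupType) (R : realType) (Gp Gm : {set gT})
  (xi eta : gT -> gT) (r : gT -> gT -> R) : Prop :=
  forall u v w, u \in Gp -> v \in Gp -> w \in Gp ->
  [/\ lactPM Gp Gm v (xi u) = xi (lactMP Gp Gm (eta v) u),
      ractPM Gp Gm (eta v) u = eta (ractMP Gp Gm v (xi u)),
      r (u * w)%g v = r u v * r w (ractMP Gp Gm v (xi u)) &
      r u (w * v)%g = r u v * r (lactMP Gp Gm (eta v) u) w].

(* Identify an element of H (x) H with its coefficients on the basis {g} (x) {h},
   and call it monomial if it has the form
     sum_(u, v in G+) c(u, v) {u X(u, v)} (x) {v Y(u, v)}   with X, Y valued in G-;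
   R is the monomial with X(u, v) = (eta(v)^u)^-1 and Y(u, v) = xi(u).  For a
   monomial, both sides of each coproduct identity are monomials of H (x) H (x) H
   indexed by G+^3, and such a monomial with positive coefficients determines its
   coefficients and its G- parts.  For R as above, the matched pair identities for
   xi, eta and the cocycle identities for r are exactly the equalities of these data.
   Conversely, if R and R^-1 are positive, expanding R R^-1 = 1 = R^-1 R shows that
   the support of R meets each set {(g, h) | g+ = u, h+ = v} in exactly one point,
   so R is a monomial with positive coefficients.  Comparing the coproduct
   identities then gives functional equations for c, X and Y; setting a variable
   to 1 in them shows that xi(u) := Y(u, 1) and eta(v) := X(1, v)^-1 are
   homomorphisms and that R has the required form with r = c. *)

From HB Require Import structures.
From mathcomp Require Import all_boot all_order all_algebra all_fingroup.
From mathcomp Require Import reals.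
From mathcomp Require Import ring.
Import GRing.Theory Num.Theory Order.TTheory.

Set Implicit Arguments.
Unset Strict Implicit.
Unset Printing Implicit Defensive.

Local Open Scope ring_scope.

Section Sums.
Variable R : comPzSemiRingType.

Lemma sum_delta (T : finType) (a : T) (F : T -> R) :
  \sum_x F x * (x == a)%:R = F a.
Proof.
rewrite (bigD1 a) //= eqxx mulr1 big1 ?addr0 // => x /negbTE ->.
by rewrite mulr0.
Qed.

Lemma sum_delta_in (T : finType) (A : {pred T}) (a : T) (F : T -> R) :
  a \in A -> \sum_(x in A) F x * (x == a)%:R = F a.
Proof.
move=> Ha; rewrite (bigD1 a) //= eqxx mulr1 big1 ?addr0 // => x /andP[_ /negbTE ->].
by rewrite mulr0.
Qed.

Lemma sum_pair (I J : finType) (F : I * J -> R) :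
  \sum_p F p = \sum_i \sum_j F (i, j).
Proof. by rewrite pair_big; apply: eq_bigr => -[]. Qed.

Lemma sum_triple (T : finType) (F : T * T * T -> R) :
  \sum_x F x = \sum_a \sum_b \sum_c F (a, b, c).
Proof. by rewrite sum_pair (sum_pair (fun p => \sum_c F (p, c))). Qed.

Lemma natr_and (a b : bool) : ((a && b)%:R : R) = a%:R * b%:R.
Proof. by case: a; case: b; rewrite /= ?mul0r ?mul1r. Qed.

Lemma natr_pair_eq (T T' : eqType) (x a : T * T') :
  ((x == a)%:R : R) = (x.1 == a.1)%:R * (x.2 == a.2)%:R.
Proof. by case: x => ? ?; case: a => ? ?; rewrite xpair_eqE natr_and. Qed.

Lemma sum_delta_sum2 (I J T : finType) (A : {pred I}) (B : {pred J})
    (F : I -> J -> T) (d : I -> J -> R) (G : T -> R) :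
  \sum_x (\sum_(u in A) \sum_(v in B) d u v * (x == F u v)%:R) * G x =
  \sum_(u in A) \sum_(v in B) d u v * G (F u v).
Proof.
under eq_bigr => x _ do rewrite big_distrl.
rewrite exchange_big; apply: eq_bigr => u _ /=.
under eq_bigr => x _ do rewrite big_distrl.
rewrite exchange_big; apply: eq_bigr => v _ /=.
under eq_bigr => x _ do rewrite -mulrA [_ * G x]mulrC mulrA.
by rewrite sum_delta.
Qed.

Lemma natr_and3 (a b c : bool) : ([&& a, b & c]%:R : R) = a%:R * b%:R * c%:R.
Proof. by case: a; case: b; case: c; rewrite /= ?(mul0r, mulr0, mul1r). Qed.

End Sums.

Section MatchedPair.
Variables (gT : finGroupType) (Gp Gm : {group gT}).
Hypothesis UF : uniq_fact Gp Gm.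
Implicit Types a g h m p q s u v w y z : gT.
Local Open Scope group_scope.

Lemma mulPM_inj a m a' m' : a \in Gp -> m \in Gm -> a' \in Gp -> m' \in Gm ->
  a * m = a' * m' -> a = a' /\ m = m'.
Proof.
move=> Ha Hm Ha' Hm' E.
have [p [_ U]] := UF (a * m).
have := U (a', m') (And3 Ha' Hm' E).
by rewrite (U (a, m) (And3 Ha Hm erefl)); case.
Qed.

Lemma mulMP_inj m a m' a' : a \in Gp -> m \in Gm -> a' \in Gp -> m' \in Gm ->
  m * a = m' * a' -> m = m' /\ a = a'.
Proof.
move=> Ha Hm Ha' Hm' E.
have [] := @mulPM_inj a^-1 m^-1 a'^-1 m'^-1; rewrite ?groupV //.
  by rewrite -!invgM E.
by move=> /invg_inj -> /invg_inj ->.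
Qed.

Lemma mul_fplus_fminus g : fplus Gp Gm g * fminus Gp Gm g = g.
Proof. by rewrite /fminus mulVKg. Qed.

Lemma mul_bminus_bplus g : bminus Gp Gm g * bplus Gp Gm g = g.
Proof. by rewrite /bminus mulgVK. Qed.

Lemma fplus_fminus_mem g : fplus Gp Gm g \in Gp /\ fminus Gp Gm g \in Gm.
Proof.
rewrite /fminus /fplus; case: pickP => [a /andP[Ha Hm] | Hn] //=.
have [[a m] [[/= Ha Hm E] _]] := UF g.
by have := Hn a; rewrite Ha E mulKg Hm.
Qed.

Lemma bplus_bminus_mem g : bplus Gp Gm g \in Gp /\ bminus Gp Gm g \in Gm.
Proof.
rewrite /bminus /bplus; case: pickP => [a /andP[Ha Hm] | Hn] //=.
have [[a m] [[/= Ha Hm E] _]] := UF g^-1.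
have E' : g = m^-1 * a^-1 by rewrite -invgM -E invgK.
by have := Hn a^-1; rewrite groupV Ha E' invgK mulgKV groupV Hm.
Qed.

Lemma fplus_mem g : fplus Gp Gm g \in Gp. Proof. by case: (fplus_fminus_mem g). Qed.
Lemma fminus_mem g : fminus Gp Gm g \in Gm. Proof. by case: (fplus_fminus_mem g). Qed.
Lemma bplus_mem g : bplus Gp Gm g \in Gp. Proof. by case: (bplus_bminus_mem g). Qed.
Lemma bminus_mem g : bminus Gp Gm g \in Gm. Proof. by case: (bplus_bminus_mem g). Qed.

Lemma lactPM_mem u y : lactPM Gp Gm u y \in Gm. Proof. exact: bminus_mem. Qed.
Lemma ractMP_mem u y : ractMP Gp Gm u y \in Gp. Proof. exact: bplus_mem. Qed.
Lemma lactMP_mem y u : lactMP Gp Gm y u \in Gp. Proof. exact: fplus_mem. Qed.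
Lemma ractPM_mem y u : ractPM Gp Gm y u \in Gm. Proof. exact: fminus_mem. Qed.

Local Hint Resolve fplus_mem fminus_mem bplus_mem bminus_mem : core.
Local Hint Resolve lactPM_mem ractMP_mem lactMP_mem ractPM_mem : core.

Lemma fplus_fminusM a m : a \in Gp -> m \in Gm ->
  fplus Gp Gm (a * m) = a /\ fminus Gp Gm (a * m) = m.
Proof. by move=> Ha Hm; apply: mulPM_inj; rewrite ?mul_fplus_fminus. Qed.

Lemma bminus_bplusM m a : m \in Gm -> a \in Gp ->
  bminus Gp Gm (m * a) = m /\ bplus Gp Gm (m * a) = a.
Proof. by move=> Hm Ha; apply: mulMP_inj; rewrite ?mul_bminus_bplus. Qed.

Lemma fplusM a m : a \in Gp -> m \in Gm -> fplus Gp Gm (a * m) = a.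
Proof. by move=> Ha Hm; case: (fplus_fminusM Ha Hm). Qed.
Lemma fminusM a m : a \in Gp -> m \in Gm -> fminus Gp Gm (a * m) = m.
Proof. by move=> Ha Hm; case: (fplus_fminusM Ha Hm). Qed.
Lemma bplusM m a : m \in Gm -> a \in Gp -> bplus Gp Gm (m * a) = a.
Proof. by move=> Hm Ha; case: (bminus_bplusM Hm Ha). Qed.
Lemma bminusM m a : m \in Gm -> a \in Gp -> bminus Gp Gm (m * a) = m.
Proof. by move=> Hm Ha; case: (bminus_bplusM Hm Ha). Qed.

Lemma fplus_plus a : a \in Gp -> fplus Gp Gm a = a.
Proof. by move=> Ha; rewrite -{1}(mulg1 a) fplusM. Qed.
Lemma fminus_plus a : a \in Gp -> fminus Gp Gm a = 1.
Proof. by move=> Ha; rewrite -{1}(mulg1 a) fminusM. Qed.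
Lemma bplus_plus a : a \in Gp -> bplus Gp Gm a = a.
Proof. by move=> Ha; rewrite -{1}(mul1g a) bplusM. Qed.
Lemma bplus_minus m : m \in Gm -> bplus Gp Gm m = 1.
Proof. by move=> Hm; rewrite -{1}(mulg1 m) bplusM. Qed.

Lemma fplus_mulGm g m : m \in Gm -> fplus Gp Gm (g * m) = fplus Gp Gm g.
Proof.
move=> Hm; rewrite -[in LHS](mul_fplus_fminus g) -[_ * _ * m]mulgA.
by apply: fplusM; rewrite // groupM.
Qed.

Lemma fplus_fminus_inj g h :
  fplus Gp Gm g = fplus Gp Gm h -> fminus Gp Gm g = fminus Gp Gm h -> g = h.
Proof. by move=> Ep Em; rewrite -(mul_fplus_fminus g) Ep Em mul_fplus_fminus. Qed.

Lemma mulg_fminusV g : g * (fminus Gp Gm g)^-1 = fplus Gp Gm g.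
Proof. by rewrite -{1}(mul_fplus_fminus g) mulgK. Qed.

Lemma fminus_eqV_of_plus g h : g * fminus Gp Gm h \in Gp ->
  fminus Gp Gm h = (fminus Gp Gm g)^-1.
Proof.
move=> /fminus_plus.
rewrite -[g in g * _](mul_fplus_fminus g) -[_ * _ * fminus _ _ h]mulgA.
rewrite fminusM //; last exact: groupM.
by move=> /eqP; rewrite -eq_invg_mul => /eqP.
Qed.

Lemma bplus_mulfminusV g :
  bplus Gp Gm (bplus Gp Gm g * (fminus Gp Gm g)^-1) = fplus Gp Gm g.
Proof.
have -> : bplus Gp Gm g * (fminus Gp Gm g)^-1 =
          (bminus Gp Gm g)^-1 * fplus Gp Gm g.
  apply: (mulgI (bminus Gp Gm g)).
  by rewrite mulgA mul_bminus_bplus mulg_fminusV mulVKg.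
by rewrite bplusM ?groupV.
Qed.

Lemma bplus_fminus_partner g (d : gT) :
  bplus Gp Gm g = fplus Gp Gm d -> g * fminus Gp Gm d \in Gp ->
  bplus Gp Gm d = fplus Gp Gm g /\ fminus Gp Gm d = (fminus Gp Gm g)^-1.
Proof.
move=> gd /fminus_eqV_of_plus md; split=> //.
by rewrite -(mul_fplus_fminus d) -gd md bplus_mulfminusV.
Qed.

Lemma ractPMMr y w h : y \in Gm -> w \in Gp -> h \in Gp ->
  ractPM Gp Gm y (w * h) = ractPM Gp Gm (ractPM Gp Gm y w) h.
Proof.
move=> Hy Hw Hh; rewrite /ractPM.
have -> : y * (w * h) = fplus Gp Gm (y * w) * fplus Gp Gm (fminus Gp Gm (y * w) * h)
                        * fminus Gp Gm (fminus Gp Gm (y * w) * h).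
  by rewrite -mulgA mul_fplus_fminus !mulgA mulgV mul1g.
by rewrite [fminus _ _ (_ * _ * _)]fminusM // groupM.
Qed.

Lemma ractPMMl y z u : y \in Gm -> z \in Gm -> u \in Gp ->
  ractPM Gp Gm (y * z) u =
  ractPM Gp Gm y (lactMP Gp Gm z u) * ractPM Gp Gm z u.
Proof.
move=> Hy Hz Hu; rewrite /ractPM /lactMP.
have -> : y * z * u = fplus Gp Gm (y * fplus Gp Gm (z * u)) *
     (fminus Gp Gm (y * fplus Gp Gm (z * u)) * fminus Gp Gm (z * u)).
  rewrite (mulgA (fplus Gp Gm (y * fplus Gp Gm (z * u)))) mul_fplus_fminus.
  by rewrite -[y * _ * fminus _ _ _]mulgA mul_fplus_fminus mulgA.
by rewrite [fminus _ _ (_ * (_ * _))]fminusM // groupM.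
Qed.

Lemma lactPM_ractPMV z h : z \in Gm -> h \in Gp ->
  lactPM Gp Gm h (ractPM Gp Gm z h)^-1 = z^-1.
Proof.
move=> Hz Hh; rewrite /lactPM /ractPM.
have -> : h * (fminus Gp Gm (z * h))^-1 = z^-1 * fplus Gp Gm (z * h).
  by apply: (mulgI z); rewrite mulVKg mulgA mulg_fminusV.
by rewrite bminusM ?groupV.
Qed.

Lemma ractPM_lactPMV h z : h \in Gp -> z \in Gm ->
  ractPM Gp Gm (lactPM Gp Gm h z)^-1 h = z^-1.
Proof.
move=> Hh Hz; rewrite /ractPM /lactPM.
have -> : (bminus Gp Gm (h * z))^-1 * h = bplus Gp Gm (h * z) * z^-1.
  by apply: (mulgI (bminus Gp Gm (h * z))); rewrite mulVKg mulgA mul_bminus_bplus mulgK.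
by rewrite fminusM ?groupV.
Qed.

Lemma bplus_mulractPMV z u : z \in Gm -> u \in Gp ->
  bplus Gp Gm (u * (ractPM Gp Gm z u)^-1) = lactMP Gp Gm z u.
Proof.
move=> Hz Hu; rewrite /lactMP /ractPM.
have -> : u * (fminus Gp Gm (z * u))^-1 = z^-1 * fplus Gp Gm (z * u).
  by apply: (mulgI z); rewrite mulVKg mulgA mulg_fminusV.
by rewrite bplusM ?groupV.
Qed.

Local Open Scope ring_scope.
Variable R : realType.

Lemma bmul_sum_unitr g k :
  \sum_(b : gT) ((b \in Gp)%:R * (bmul Gp Gm g b k)%:R : R) = (k == g)%:R.
Proof.
rewrite (bigD1 (bplus Gp Gm g)) //= big1 ?addr0 => [|b /negbTE nb].
  by rewrite /bmul fplus_plus ?fminus_plus ?bplus_mem // mulg1 eqxx mul1r eq_sym.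
case: (boolP (b \in Gp)) => Hb; last by rewrite mul0r.
by rewrite /bmul fplus_plus // eq_sym nb mulr0.
Qed.

Lemma bmul_sum_unitl h k :
  \sum_(b : gT) ((b \in Gp)%:R * (bmul Gp Gm b h k)%:R : R) = (k == h)%:R.
Proof.
rewrite (bigD1 (fplus Gp Gm h)) //= big1 ?addr0 => [|b /negbTE nb].
  by rewrite /bmul bplus_plus ?fplus_mem // mul_fplus_fminus eqxx mul1r eq_sym.
case: (boolP (b \in Gp)) => Hb; last by rewrite mul0r.
by rewrite /bmul bplus_plus // nb mulr0.
Qed.

Lemma mul3_basis_leg23 (B : H2 gT R) x k :
  \sum_i leg23 Gp B i * [&& bmul Gp Gm x.1.1 i.1.1 k.1.1,
        bmul Gp Gm x.1.2 i.1.2 k.1.2 & bmul Gp Gm x.2 i.2 k.2]%:R =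
  (k.1.1 == x.1.1)%:R * \sum_b \sum_c
      B (b, c) * (bmul Gp Gm x.1.2 b k.1.2)%:R * (bmul Gp Gm x.2 c k.2)%:R.
Proof.
rewrite sum_triple -bmul_sum_unitr big_distrl; apply: eq_bigr => a _.
rewrite big_distrr; apply: eq_bigr => b _; rewrite big_distrr; apply: eq_bigr => c _.
by rewrite ffunE natr_and3 /=; ring.
Qed.

Lemma mul3_leg13_leg23 (A B : H2 gT R) k :
  mul3 Gp Gm (leg13 Gp A) (leg23 Gp B) k =
  \sum_a \sum_b A (k.1.1, a) * B (k.1.2, b) * (bmul Gp Gm a b k.2)%:R.
Proof.
rewrite ffunE.
under eq_bigr => x _ do
  rewrite (eq_bigr _ (fun i _ => esym (mulrA _ _ _))) -big_distrr mul3_basis_leg23.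
rewrite sum_triple (bigD1 k.1.1) //= [X in _ + X]big1 ?addr0 => [|a na]; last first.
  by apply: big1 => m _; apply: big1 => c _; rewrite eq_sym (negbTE na) mul0r mulr0.
under eq_bigr => m _ do under eq_bigr => c _ do rewrite eqxx mul1r.
rewrite exchange_big; apply: eq_bigr => a _ /=.
transitivity (\sum_b (\sum_(m : gT) (m \in Gp)%:R * (bmul Gp Gm m b k.1.2)%:R) *
  \sum_c A (k.1.1, a) * B (b, c) * (bmul Gp Gm a c k.2)%:R).
  under eq_bigr => m _ do rewrite big_distrr.
  rewrite exchange_big; apply: eq_bigr => b _; rewrite big_distrl; apply: eq_bigr => m _.
  by rewrite !big_distrr; apply: eq_bigr => c _; rewrite ffunE /=; ring.
rewrite (eq_bigr (fun b => (\sum_c A (k.1.1, a) * B (b, c) * (bmul Gp Gm a c k.2)%:R)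
                           * (b == k.1.2)%:R)) ?sum_delta //.
by move=> b _; rewrite bmul_sum_unitl mulrC eq_sym.
Qed.

Lemma mul3_basis_leg12 (B : H2 gT R) x k :
  \sum_i leg12 Gp B i * [&& bmul Gp Gm x.1.1 i.1.1 k.1.1,
        bmul Gp Gm x.1.2 i.1.2 k.1.2 & bmul Gp Gm x.2 i.2 k.2]%:R =
  (\sum_a \sum_b
      B (a, b) * (bmul Gp Gm x.1.1 a k.1.1)%:R * (bmul Gp Gm x.1.2 b k.1.2)%:R)
  * (k.2 == x.2)%:R.
Proof.
rewrite sum_triple -bmul_sum_unitr big_distrl; apply: eq_bigr => a _.
rewrite big_distrl; apply: eq_bigr => b _; rewrite big_distrr; apply: eq_bigr => c _.
by rewrite ffunE natr_and3 /=; ring.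
Qed.

Lemma mul3_leg13_leg12 (A B : H2 gT R) k :
  mul3 Gp Gm (leg13 Gp A) (leg12 Gp B) k =
  \sum_a \sum_b A (a, k.2) * B (b, k.1.2) * (bmul Gp Gm a b k.1.1)%:R.
Proof.
rewrite ffunE.
under eq_bigr => x _ do
  rewrite (eq_bigr _ (fun i _ => esym (mulrA _ _ _))) -big_distrr mul3_basis_leg12.
rewrite sum_pair exchange_big (bigD1 k.2) //= [X in _ + X]big1 ?addr0 => [|c nc]; last first.
  by apply: big1 => p _; rewrite eq_sym (negbTE nc) mulr0 mulr0.
under eq_bigr => p _ do rewrite eqxx mulr1.
rewrite sum_pair; apply: eq_bigr => a _.
transitivity (\sum_b (\sum_(m : gT) (m \in Gp)%:R * (bmul Gp Gm m b k.1.2)%:R) *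
  \sum_c A (a, k.2) * B (c, b) * (bmul Gp Gm a c k.1.1)%:R).
  under [RHS]eq_bigr => b _ do rewrite big_distrl.
  rewrite [RHS]exchange_big; apply: eq_bigr => m _ /=.
  under [RHS]eq_bigr => b _ do rewrite big_distrr.
  rewrite big_distrr [RHS]exchange_big; apply: eq_bigr => c _ /=.
  by rewrite !big_distrr; apply: eq_bigr => b _; rewrite ffunE /=; ring.
rewrite (eq_bigr (fun b => (\sum_c A (a, k.2) * B (c, b) * (bmul Gp Gm a c k.1.1)%:R)
                           * (b == k.1.2)%:R)) ?sum_delta //.
by move=> b _; rewrite bmul_sum_unitl mulrC eq_sym.
Qed.

Definition point2 (X Y : gT -> gT -> gT) u v : gT * gT :=
  ((u * X u v)%g, (v * Y u v)%g).

Definition monomial2 (c : gT -> gT -> R) (X Y : gT -> gT -> gT) : H2 gT R :=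
  [ffun k => \sum_(u in Gp) \sum_(v in Gp) c u v * (k == point2 X Y u v)%:R].

Definition point3 (X1 X2 X3 : gT -> gT -> gT -> gT) p q s : gT * gT * gT :=
  ((p * X1 p q s)%g, (q * X2 p q s)%g, (s * X3 p q s)%g).

Definition monomial3 (c : gT -> gT -> gT -> R) (X1 X2 X3 : gT -> gT -> gT -> gT) :
  H3 gT R :=
  [ffun k => \sum_(p in Gp) \sum_(q in Gp) \sum_(s in Gp)
     c p q s * (k == point3 X1 X2 X3 p q s)%:R].

Definition minus_valued3 (X1 X2 X3 : gT -> gT -> gT -> gT) :=
  {in Gp & Gp & Gp, forall p q s,
    [/\ X1 p q s \in Gm, X2 p q s \in Gm & X3 p q s \in Gm]}.

Section Monomial3.
Variables (X1 X2 X3 : gT -> gT -> gT -> gT).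
Hypothesis HX : minus_valued3 X1 X2 X3.

Lemma point3_fplus p q s : p \in Gp -> q \in Gp -> s \in Gp ->
  let k := point3 X1 X2 X3 p q s in
  [/\ fplus Gp Gm k.1.1 = p, fplus Gp Gm k.1.2 = q & fplus Gp Gm k.2 = s].
Proof. by move=> Hp Hq Hs; have [? ? ?] := HX Hp Hq Hs; rewrite /= !fplusM. Qed.

Lemma monomial3E c k p q s :
  fplus Gp Gm k.1.1 = p -> fplus Gp Gm k.1.2 = q -> fplus Gp Gm k.2 = s ->
  monomial3 c X1 X2 X3 k = c p q s * (k == point3 X1 X2 X3 p q s)%:R.
Proof.
move=> <- <- <-; rewrite ffunE.
transitivity (\sum_(p' in Gp) \sum_(q' in Gp) \sum_(s' in Gp)
  c p' q' s' * (k == point3 X1 X2 X3 p' q' s')%:R * (p' == fplus Gp Gm k.1.1)%:R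
  * (q' == fplus Gp Gm k.1.2)%:R * (s' == fplus Gp Gm k.2)%:R).
  apply: eq_bigr => p' Hp; apply: eq_bigr => q' Hq; apply: eq_bigr => s' Hs.
  have [Ek|] := eqVneq k (point3 X1 X2 X3 p' q' s'); last by rewrite !mulr0 !mul0r.
  have [] := point3_fplus Hp Hq Hs; rewrite -Ek => -> -> ->.
  by rewrite !eqxx !mulr1.
under eq_bigr => p' _ do under eq_bigr => q' _ do rewrite sum_delta_in //.
under eq_bigr => p' _ do rewrite sum_delta_in //.
by rewrite sum_delta_in.
Qed.

End Monomial3.

Lemma eq_monomial2 c X Y d X' Y' :
  {in Gp &, forall u v, [/\ X u v = X' u v, Y u v = Y' u v & c u v = d u v]} ->
  monomial2 c X Y = monomial2 d X' Y'.
Proof.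
move=> E; apply/ffunP => k; rewrite !ffunE /point2.
apply: eq_bigr => u Hu; apply: eq_bigr => v Hv.
by have [-> -> ->] := E u v Hu Hv.
Qed.

Lemma eq_monomial3 c X1 X2 X3 d Y1 Y2 Y3 :
  {in Gp & Gp & Gp, forall p q s, [/\ X1 p q s = Y1 p q s, X2 p q s = Y2 p q s,
                                     X3 p q s = Y3 p q s & c p q s = d p q s]} ->
  monomial3 c X1 X2 X3 = monomial3 d Y1 Y2 Y3.
Proof.
move=> E; apply/ffunP => k; rewrite !ffunE /point3.
apply: eq_bigr => p Hp; apply: eq_bigr => q Hq; apply: eq_bigr => s Hs.
by have [-> -> -> ->] := E p q s Hp Hq Hs.
Qed.

Lemma monomial3_inj c X1 X2 X3 d Y1 Y2 Y3 :
  minus_valued3 X1 X2 X3 -> minus_valued3 Y1 Y2 Y3 ->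
  monomial3 c X1 X2 X3 = monomial3 d Y1 Y2 Y3 ->
  {in Gp & Gp & Gp, forall p q s, 0 < c p q s ->
     [/\ X1 p q s = Y1 p q s, X2 p q s = Y2 p q s,
         X3 p q s = Y3 p q s & c p q s = d p q s]}.
Proof.
move=> HX HY E p q s Hp Hq Hs c_gt0.
have [f1 f2 f3] := point3_fplus HX Hp Hq Hs.
have := congr1 (fun M : H3 gT R => M (point3 X1 X2 X3 p q s)) E.
rewrite (monomial3E HX _ f1 f2 f3) (monomial3E HY _ f1 f2 f3) eqxx mulr1.
case: eqP => [[/mulgI-> /mulgI-> /mulgI->] -> | _]; first by rewrite mulr1.
by rewrite mulr0 => c0; rewrite c0 ltxx in c_gt0.
Qed.

Section Monomial2.
Variables (c : gT -> gT -> R) (X Y : gT -> gT -> gT).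
Hypotheses (HX : {in Gp &, forall u v, X u v \in Gm})
           (HY : {in Gp &, forall u v, Y u v \in Gm}).

Lemma sum_monomial2 (G : gT * gT -> R) :
  \sum_x monomial2 c X Y x * G x =
  \sum_(u in Gp) \sum_(v in Gp) c u v * G (point2 X Y u v).
Proof. by under eq_bigr => x _ do rewrite ffunE; rewrite sum_delta_sum2. Qed.

Lemma sum_monomial2_fst k1 (G : gT -> R) :
  \sum_a monomial2 c X Y (k1, a) * G a =
  \sum_(u in Gp) \sum_(v in Gp) c u v * (k1 == (u * X u v)%g)%:R * G (v * Y u v)%g.
Proof.
rewrite -(sum_delta_sum2 _ _ (fun u v => v * Y u v)%g
                          (fun u v => c u v * (k1 == (u * X u v)%g)%:R)).
apply: eq_bigr => a _; rewrite ffunE; congr (_ * _).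
by apply: eq_bigr => u _; apply: eq_bigr => v _; rewrite natr_pair_eq mulrA.
Qed.

Lemma sum_monomial2_snd k2 (G : gT -> R) :
  \sum_a monomial2 c X Y (a, k2) * G a =
  \sum_(u in Gp) \sum_(v in Gp) c u v * (k2 == (v * Y u v)%g)%:R * G (u * X u v)%g.
Proof.
rewrite -(sum_delta_sum2 _ _ (fun u v => u * X u v)%g
                          (fun u v => c u v * (k2 == (v * Y u v)%g)%:R)).
apply: eq_bigr => a _; rewrite ffunE; congr (_ * _).
by apply: eq_bigr => u _; apply: eq_bigr => v _; rewrite natr_pair_eq mulrAC mulrA.
Qed.

Lemma Delta_id_monomial2 : Delta_id Gp Gm (monomial2 c X Y) =
  monomial3 (fun w h v => c (w * h)%g v)
    (fun w h v => lactPM Gp Gm h (X (w * h)%g v))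
    (fun w h v => X (w * h)%g v) (fun w h v => Y (w * h)%g v).
Proof.
apply/ffunP => k; rewrite !ffunE.
under eq_bigr => x _ do rewrite -mulrA.
rewrite sum_monomial2.
transitivity (\sum_(u in Gp) \sum_(v in Gp) \sum_(h in Gp) c u v *
  (k == ((u * h^-1 * lactPM Gp Gm h (X u v))%g, (h * X u v)%g, (v * Y u v)%g))%:R).
  apply: eq_bigr => u Hu; apply: eq_bigr => v Hv.
  rewrite /dcoef fplusM ?fminusM ?HX // big_distrl big_distrr /=; apply: eq_bigr => h _.
  by rewrite !natr_pair_eq /= [(v * _)%g == _]eq_sym.
under eq_bigr => u _ do rewrite exchange_big /=.
rewrite exchange_big [RHS]exchange_big /=; apply: eq_bigr => h Hh.
rewrite (reindex_inj (mulIg h)) /=.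
apply: eq_big => [w|w _]; first by rewrite groupMr.
by apply: eq_bigr => v _; rewrite mulgK.
Qed.

Lemma id_Delta_monomial2 : id_Delta Gp Gm (monomial2 c X Y) =
  monomial3 (fun u w h => c u (w * h)%g) (fun u w h => X u (w * h)%g)
    (fun u w h => lactPM Gp Gm h (Y u (w * h)%g)) (fun u w h => Y u (w * h)%g).
Proof.
apply/ffunP => k; rewrite !ffunE.
under eq_bigr => x _ do rewrite -mulrA.
rewrite sum_monomial2.
transitivity (\sum_(u in Gp) \sum_(v in Gp) \sum_(h in Gp) c u v *
  (k == ((u * X u v)%g, (v * h^-1 * lactPM Gp Gm h (Y u v))%g, (h * Y u v)%g))%:R).
  apply: eq_bigr => u Hu; apply: eq_bigr => v Hv.
  rewrite /dcoef fplusM ?fminusM ?HY // !big_distrr /=; apply: eq_bigr => h _.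
  by rewrite !natr_pair_eq /= [(u * _)%g == _]eq_sym natr_and !mulrA.
apply: eq_bigr => u Hu; rewrite exchange_big [RHS]exchange_big /=.
apply: eq_bigr => h Hh; rewrite (reindex_inj (mulIg h)) /=.
apply: eq_big => [w|w _]; first by rewrite groupMr.
by rewrite mulgK.
Qed.

Lemma mul3_leg13_leg23_monomial2 :
  let M := monomial2 c X Y in
  mul3 Gp Gm (leg13 Gp M) (leg23 Gp M) =
  monomial3 (fun u u' v => c u v * c u' (ractMP Gp Gm v (Y u v)))
    (fun u u' v => X u v) (fun u u' v => X u' (ractMP Gp Gm v (Y u v)))
    (fun u u' v => Y u v * Y u' (ractMP Gp Gm v (Y u v)))%g.
Proof.
apply/ffunP => k; rewrite mul3_leg13_leg23 ffunE /ractMP.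
under eq_bigr => a _ do (under eq_bigr => b _ do rewrite -mulrA; rewrite -big_distrr /=).
under eq_bigr => a _ do rewrite sum_monomial2_fst.
rewrite sum_monomial2_fst; apply: eq_bigr => u Hu.
rewrite [RHS]exchange_big; apply: eq_bigr => v Hv /=.
rewrite big_distrr; apply: eq_bigr => u' Hu'; rewrite big_distrr /=.
set t := bplus Gp Gm (v * Y u v)%g.
rewrite (eq_bigr (fun v' => (c u v * (k.1.1 == (u * X u v)%g)%:R *
   (c u' v' * (k.1.2 == (u' * X u' v')%g)%:R * (k.2 == (v * Y u v * Y u' v')%g)%:R))
   * (v' == t)%:R)); last first.
  move=> v' Hv'; rewrite /bmul fplusM ?fminusM ?HY // natr_and.
  by rewrite [bplus _ _ _ == _]eq_sym [_ == k.2]eq_sym /t; ring.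
rewrite sum_delta_in; last exact: bplus_mem.
by rewrite /point3 -/t !natr_pair_eq /= mulgA; ring.
Qed.

Lemma mul3_leg13_leg12_monomial2 :
  let M := monomial2 c X Y in
  mul3 Gp Gm (leg13 Gp M) (leg12 Gp M) =
  monomial3 (fun u w h => c u h * c (ractMP Gp Gm u (X u h)) w)
    (fun u w h => X u h * X (ractMP Gp Gm u (X u h)) w)%g
    (fun u w h => Y (ractMP Gp Gm u (X u h)) w) (fun u w h => Y u h).
Proof.
apply/ffunP => k; rewrite mul3_leg13_leg12 ffunE /ractMP.
under eq_bigr => a _ do (under eq_bigr => b _ do rewrite -mulrA; rewrite -big_distrr /=).
under eq_bigr => a _ do rewrite sum_monomial2_snd.
rewrite sum_monomial2_snd; apply: eq_bigr => u Hu.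
rewrite [RHS]exchange_big; apply: eq_bigr => h Hh /=.
rewrite big_distrr /=; under eq_bigr => u2 _ do rewrite big_distrr.
rewrite exchange_big; apply: eq_bigr => w Hw /=.
set t := bplus Gp Gm (u * X u h)%g.
rewrite (eq_bigr (fun u2 => (c u h * (k.2 == (h * Y u h)%g)%:R *
   (c u2 w * (k.1.2 == (w * Y u2 w)%g)%:R * (k.1.1 == (u * X u h * X u2 w)%g)%:R))
   * (u2 == t)%:R)); last first.
  move=> u2 Hu2; rewrite /bmul fplusM ?fminusM ?HX // natr_and.
  by rewrite [bplus _ _ _ == _]eq_sym [_ == k.1.1]eq_sym /t; ring.
rewrite sum_delta_in; last exact: bplus_mem.
by rewrite /point3 -/t !natr_pair_eq /= mulgA; ring.
Qed.

End Monomial2.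

Section RformCoproduct.
Variables (xi eta : {morphism Gp >-> gT}) (r : gT -> gT -> R).
Hypotheses (xi_Gm : xi @* Gp \subset Gm) (eta_Gm : eta @* Gp \subset Gm).
Hypothesis r_compat : compat Gp Gm xi eta r.

Let X u v := (ractPM Gp Gm (eta v) u)^-1%g.
Let Y u (v : gT) := xi u.

Let xiGm u : u \in Gp -> xi u \in Gm.
Proof. by move=> Hu; apply: (subsetP xi_Gm); apply: mem_morphim. Qed.

Let etaGm u : u \in Gp -> eta u \in Gm.
Proof. by move=> Hu; apply: (subsetP eta_Gm); apply: mem_morphim. Qed.

Let HX : {in Gp &, forall u v, X u v \in Gm}.
Proof. by move=> u v _ _; rewrite groupV fminus_mem. Qed.

Let HY : {in Gp &, forall u v, Y u v \in Gm}.
Proof. by move=> u v Hu _; apply: xiGm. Qed.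

Lemma Delta_id_Rform : let Rm := Rform Gp Gm xi eta r in
  Delta_id Gp Gm Rm = mul3 Gp Gm (leg13 Gp Rm) (leg23 Gp Rm).
Proof.
rewrite /= -[Rform _ _ _ _ _]/(monomial2 r X Y).
rewrite Delta_id_monomial2 // mul3_leg13_leg23_monomial2 //.
apply: eq_monomial3 => w h v Hw Hh Hv.
have [_ eta_ract r_mull _] := r_compat Hw Hv Hh.
split=> //; rewrite /X /Y.
- by rewrite ractPMMr ?etaGm // lactPM_ractPMV.
- by rewrite ractPMMr ?etaGm // eta_ract.
- by rewrite morphM.
Qed.

Lemma id_Delta_Rform : let Rm := Rform Gp Gm xi eta r in
  id_Delta Gp Gm Rm = mul3 Gp Gm (leg13 Gp Rm) (leg12 Gp Rm).
Proof.
rewrite /= -[Rform _ _ _ _ _]/(monomial2 r X Y).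
rewrite id_Delta_monomial2 // mul3_leg13_leg12_monomial2 //.
apply: eq_monomial3 => u w h Hu Hw Hh.
have [xi_lact _ _ r_mulr] := r_compat Hu Hh Hw.
rewrite /X /Y /ractMP bplus_mulractPMV ?etaGm //.
by split=> //; rewrite morphM // ractPMMl ?etaGm // invMg.
Qed.

End RformCoproduct.

Section InvertibleSupport.
Variables A B : H2 gT R.
Hypotheses (A_ge0 : positive2 A) (B_ge0 : positive2 B).
Hypothesis AB1 : mul2 Gp Gm A B = one2 R Gp.

Let mul2_term_ge0 i j (b : bool) : 0 <= A i * B j * b%:R.
Proof. by rewrite !mulr_ge0 ?ler0n. Qed.

Let mul2_term_gt0 i j (b : bool) :
  0 < A i * B j * b%:R -> [/\ 0 < A i, 0 < B j & b].
Proof.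
case: b; last by rewrite mulr0 ltxx.
rewrite mulr1 lt0r mulf_eq0 negb_or => /andP[/andP[Ai Bj] _].
by rewrite !lt0r Ai Bj A_ge0 B_ge0.
Qed.

Lemma mul2_one_witness o1 o2 : o1 \in Gp -> o2 \in Gp ->
  exists i j, [/\ 0 < A i, 0 < B j, bmul Gp Gm i.1 j.1 o1 & bmul Gp Gm i.2 j.2 o2].
Proof.
move=> H1 H2; have : mul2 Gp Gm A B (o1, o2) != 0 by rewrite AB1 ffunE /= H1 H2 oner_neq0.
rewrite ffunE => /eqP/psumr_neq0P[i _|i /= /gt_eqF/negbT/eqP].
  by apply: sumr_ge0 => j _.
case/psumr_neq0P => [j _ //|j /= /mul2_term_gt0[Ai Bj /andP[b1 b2]]].
by exists i, j.
Qed.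

Lemma mul2_support_plus i j : 0 < A i -> 0 < B j ->
  bplus Gp Gm i.1 = fplus Gp Gm j.1 -> bplus Gp Gm i.2 = fplus Gp Gm j.2 ->
  (i.1 * fminus Gp Gm j.1)%g \in Gp /\ (i.2 * fminus Gp Gm j.2)%g \in Gp.
Proof.
move=> Ai Bj e1 e2; set z := ((i.1 * fminus Gp Gm j.1)%g, (i.2 * fminus Gp Gm j.2)%g).
suff : mul2 Gp Gm A B z != 0.
  by rewrite AB1 ffunE pnatr_eq0 eqb0 negbK => /andP.
rewrite ffunE; apply/eqP => S0.
have S1 := psumr_eq0P (fun i _ => sumr_ge0 _ (fun j _ => mul2_term_ge0 i j _)) S0 (i:=i) isT.
have := psumr_eq0P (fun j _ => mul2_term_ge0 i j _) S1 (i:=j) isT.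
rewrite /bmul /z /= e1 e2 !eqxx mulr1 => /eqP.
by rewrite mulf_eq0 !gt_eqF.
Qed.

Lemma support_meets_fibre u v : u \in Gp -> v \in Gp ->
  exists i, [/\ 0 < A i, fplus Gp Gm i.1 = u & fplus Gp Gm i.2 = v].
Proof.
move=> Hu Hv.
have [i [j [Ai _ /andP[_ /eqP e1] /andP[_ /eqP e2]]]] := mul2_one_witness Hu Hv.
exists i; split=> //.
- by rewrite -(fplus_mulGm i.1 (fminus_mem j.1)) e1 fplus_plus.
- by rewrite -(fplus_mulGm i.2 (fminus_mem j.2)) e2 fplus_plus.
Qed.

End InvertibleSupport.

Section InvertibleMonomial.
Variables A B : H2 gT R.
Hypotheses (A_ge0 : positive2 A) (B_ge0 : positive2 B).
Hypotheses (AB1 : mul2 Gp Gm A B = one2 R Gp) (BA1 : mul2 Gp Gm B A = one2 R Gp).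

(* Take [j] in the support of [B] with plus parts the [bplus] parts of [i]: the
   products [i j] and [j i'] occur in [A B = 1] and [B A = 1], so their components
   lie in [Gp], which forces [fminus j = (fminus i)^-1] and [fminus i' = (fminus j)^-1]. *)
Lemma support_fibre_uniq i i' : 0 < A i -> 0 < A i' ->
  fplus Gp Gm i.1 = fplus Gp Gm i'.1 -> fplus Gp Gm i.2 = fplus Gp Gm i'.2 -> i = i'.
Proof.
move=> Ai Ai' e1 e2.
have [j [Bj j1 j2]] := support_meets_fibre B_ge0 A_ge0 BA1 (bplus_mem i.1) (bplus_mem i.2).
have [p1 p2] := mul2_support_plus A_ge0 B_ge0 AB1 Ai Bj (esym j1) (esym j2).
have [b1 m1] := bplus_fminus_partner (esym j1) p1.
have [b2 m2] := bplus_fminus_partner (esym j2) p2.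
rewrite e1 in b1; rewrite e2 in b2.
have [/fminus_eqV_of_plus n1 /fminus_eqV_of_plus n2] := mul2_support_plus B_ge0 A_ge0 BA1 Bj Ai' b1 b2.
rewrite m1 invgK in n1; rewrite m2 invgK in n2.
by case: i i' {Ai Ai' j1 j2 p1 p2 b1 b2 m1 m2} e1 e2 n1 n2 => [g1 g2] [h1 h2] /= *;
  congr pair; apply: fplus_fminus_inj.
Qed.

Lemma positive_invertible_monomial2 : exists c X Y,
  [/\ {in Gp &, forall u v, 0 < c u v}, forall u v, X u v \in Gm,
      forall u v, Y u v \in Gm & A = monomial2 c X Y].
Proof.
pose pt u v := odflt (1, 1)%g
  [pick i | [&& 0 < A i, fplus Gp Gm i.1 == u & fplus Gp Gm i.2 == v]].
have ptP u v : u \in Gp -> v \in Gp ->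
    [/\ 0 < A (pt u v), fplus Gp Gm (pt u v).1 = u & fplus Gp Gm (pt u v).2 = v].
  move=> Hu Hv; rewrite /pt; case: pickP => [i /and3P[Ai /eqP e1 /eqP e2] | none] //=.
  have [i [Ai e1 e2]] := support_meets_fibre A_ge0 B_ge0 AB1 Hu Hv.
  by have := none i; rewrite Ai e1 e2 !eqxx.
exists (fun u v => A (pt u v)), (fun u v => fminus Gp Gm (pt u v).1),
       (fun u v => fminus Gp Gm (pt u v).2).
split=> //; first by move=> u v Hu Hv; case: (ptP u v Hu Hv).
apply/ffunP => k; rewrite ffunE; symmetry.
transitivity (\sum_(u in Gp) \sum_(v in Gp)
  A k * (u == fplus Gp Gm k.1)%:R * (v == fplus Gp Gm k.2)%:R); last first.
  by under eq_bigr => u _ do rewrite sum_delta_in //; rewrite sum_delta_in.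
apply: eq_bigr => u Hu; apply: eq_bigr => v Hv.
have [Apt e1 e2] := ptP u v Hu Hv.
have -> : point2 (fun u v => fminus Gp Gm (pt u v).1) (fun u v => fminus Gp Gm (pt u v).2) u v
          = pt u v.
  by rewrite /point2; case: (pt u v) e1 e2 => g1 g2 /= <- <-; rewrite !mul_fplus_fminus.
have [-> | ne] := eqVneq k (pt u v); first by rewrite e1 e2 !eqxx !mulr1.
rewrite mulr0; have [Ak | ] := boolP (0 < A k).
  have [eu | ] := eqVneq u (fplus Gp Gm k.1); last by rewrite mulr0 mul0r.
  have [ev | ] := eqVneq v (fplus Gp Gm k.2); last by rewrite mulr0.
  by case/eqP: ne; apply: support_fibre_uniq; rewrite ?e1 ?e2.
by rewrite lt0r A_ge0 andbT negbK => /eqP ->; rewrite !mul0r.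
Qed.

End InvertibleMonomial.

Section MonomialCoproduct.
Variables (c : gT -> gT -> R) (X Y : gT -> gT -> gT).
Hypothesis c_gt0 : {in Gp &, forall u v, 0 < c u v}.
Hypotheses (X_Gm : forall u v, X u v \in Gm) (Y_Gm : forall u v, Y u v \in Gm).
Local Hint Resolve X_Gm Y_Gm : core.
Let M := monomial2 c X Y.
Hypothesis Delta_M : Delta_id Gp Gm M = mul3 Gp Gm (leg13 Gp M) (leg23 Gp M).
Hypothesis id_Delta_M : id_Delta Gp Gm M = mul3 Gp Gm (leg13 Gp M) (leg12 Gp M).

Lemma monomial2_Delta_cocycle : {in Gp & Gp & Gp, forall w h v,
  let t := ractMP Gp Gm v (Y w v) in
  [/\ lactPM Gp Gm h (X (w * h)%g v) = X w v, X (w * h)%g v = X h t,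
      Y (w * h)%g v = (Y w v * Y h t)%g & c (w * h)%g v = c w v * c h t]}.
Proof.
move=> w h v Hw Hh Hv; move: Delta_M.
rewrite /M Delta_id_monomial2 ?mul3_leg13_leg23_monomial2; try exact: in2W.
move/monomial3_inj; apply=> //; try by move=> *; split; rewrite ?groupM.
exact/c_gt0/Hv/groupM.
Qed.

Lemma monomial2_id_Delta_cocycle : {in Gp & Gp & Gp, forall u w h,
  let t := ractMP Gp Gm u (X u h) in
  [/\ X u (w * h)%g = (X u h * X t w)%g, lactPM Gp Gm h (Y u (w * h)%g) = Y t w,
      Y u (w * h)%g = Y u h & c u (w * h)%g = c u h * c t w]}.
Proof.
move=> u w h Hu Hw Hh; move: id_Delta_M.
rewrite /M id_Delta_monomial2 ?mul3_leg13_leg12_monomial2; try exact: in2W.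
move/monomial3_inj; apply=> //; try by move=> *; split; rewrite ?groupM.
exact/c_gt0/groupM.
Qed.

Let xi u := Y u 1%g.
Let eta v := (X 1%g v)^-1%g.

Lemma monomial2_Y_fst : {in Gp &, forall u v, Y u v = xi u}.
Proof.
move=> u v Hu Hv; have [_ _ + _] := monomial2_id_Delta_cocycle Hu Hv (group1 _).
by rewrite mulg1.
Qed.

Lemma monomial2_X_ractPM : {in Gp &, forall u v, X u v = (ractPM Gp Gm (eta v) u)^-1%g}.
Proof.
move=> u v Hu Hv; have [+ _ _ _] := monomial2_Delta_cocycle (group1 _) Hu Hv.
by rewrite mul1g /eta => <-; rewrite ractPM_lactPMV // invgK.
Qed.

Lemma monomial2_ractMP_X : {in Gp &, forall u v,
  ractMP Gp Gm u (X u v) = lactMP Gp Gm (eta v) u}.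
Proof.
by move=> u v Hu Hv; rewrite monomial2_X_ractPM // /ractMP bplus_mulractPMV ?groupV.
Qed.

Lemma monomial2_xiM : {in Gp &, {morph xi : u w / (u * w)%g}}.
Proof.
move=> u w Hu Hw; have [_ _ + _] := monomial2_Delta_cocycle Hu Hw (group1 _).
by rewrite /xi => ->; rewrite [Y w _]monomial2_Y_fst.
Qed.

Lemma monomial2_etaM : {in Gp &, {morph eta : v w / (v * w)%g}}.
Proof.
move=> v w Hv Hw; have [+ _ _ _] := monomial2_id_Delta_cocycle (group1 _) Hv Hw.
by rewrite /eta /ractMP mul1g bplus_minus // => ->; rewrite invMg.
Qed.

Lemma monomial2_compat : compat Gp Gm xi eta c.
Proof.
move=> u v w Hu Hv Hw.
have [_ _ _ c_mull] := monomial2_Delta_cocycle Hu Hw Hv.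
have [_ _ _ c_mulr] := monomial2_id_Delta_cocycle Hu Hw Hv.
have [_ X_eta _ _] := monomial2_Delta_cocycle Hu (group1 _) Hv.
have [_ Y_lact _ _] := monomial2_id_Delta_cocycle Hu (group1 _) Hv.
rewrite mulg1 mul1g in X_eta Y_lact.
rewrite [Y u v]monomial2_Y_fst // in c_mull X_eta Y_lact.
rewrite monomial2_ractMP_X // in c_mulr Y_lact.
split=> //.
by rewrite {2}/eta -X_eta monomial2_X_ractPM // invgK.
Qed.

Lemma monomial2_Rform : monomial2 c X Y = Rform Gp Gm xi eta c.
Proof.
apply: eq_monomial2 => u v Hu Hv.
by rewrite monomial2_X_ractPM // monomial2_Y_fst.
Qed.

Lemma monomial2_coproduct_Rform : exists xi eta : {morphism Gp >-> gT},
  [/\ xi @* Gp \subset Gm, eta @* Gp \subset Gm, compat Gp Gm xi eta c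
    & monomial2 c X Y = Rform Gp Gm xi eta c].
Proof.
exists (Morphism monomial2_xiM), (Morphism monomial2_etaM); split.
- by apply/subsetP => _ /morphimP[u _ _ ->]; apply: Y_Gm.
- by apply/subsetP => _ /morphimP[v _ _ ->]; rewrite /= groupV; apply: X_Gm.
- exact: monomial2_compat.
- exact: monomial2_Rform.
Qed.

End MonomialCoproduct.

End MatchedPair.

Unset Implicit Arguments.

Theorem proposition3 (gT : finGroupType) (Gp Gm : {group gT}) (R : realType) :
  uniq_fact Gp Gm ->
  (forall (xi eta : {morphism Gp >-> gT}) (r : gT -> gT -> R),
     (xi @* Gp \subset Gm)%g -> (eta @* Gp \subset Gm)%g ->
     (forall u v, u \in Gp -> v \in Gp -> 0 < r u v) ->
     compat Gp Gm xi eta r ->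
     let Rm := Rform Gp Gm xi eta r in
     Delta_id Gp Gm Rm = mul3 Gp Gm (leg13 Gp Rm) (leg23 Gp Rm) /\
     id_Delta Gp Gm Rm = mul3 Gp Gm (leg13 Gp Rm) (leg12 Gp Rm))
  /\
  (forall A : H2 gT R,
     positive2 A ->
     (exists B : H2 gT R, positive2 B /\
        mul2 Gp Gm A B = one2 R Gp /\ mul2 Gp Gm B A = one2 R Gp) ->
     Delta_id Gp Gm A = mul3 Gp Gm (leg13 Gp A) (leg23 Gp A) ->
     id_Delta Gp Gm A = mul3 Gp Gm (leg13 Gp A) (leg12 Gp A) ->
     exists (xi eta : {morphism Gp >-> gT}) (r : gT -> gT -> R),
       [/\ (xi @* Gp \subset Gm)%g, (eta @* Gp \subset Gm)%g,
           (forall u v, u \in Gp -> v \in Gp -> 0 < r u v),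
           compat Gp Gm xi eta r &
           A = Rform Gp Gm xi eta r]).
Proof.
move=> UF; split=> [xi eta r xi_Gm eta_Gm _ r_compat | A A_ge0 [B [B_ge0 [AB1 BA1]]]].
  (* The coproduct identities for [R] hold whatever the sign of [r]. *)
  by split; [apply: Delta_id_Rform | apply: id_Delta_Rform].
have [c [X [Y [c_gt0 X_Gm Y_Gm ->]]]] :=
  positive_invertible_monomial2 UF A_ge0 B_ge0 AB1 BA1.
move=> Delta_M id_Delta_M.
have [xi [eta [xi_Gm eta_Gm c_compat ->]]] :=
  monomial2_coproduct_Rform UF c_gt0 X_Gm Y_Gm Delta_M id_Delta_M.
by exists xi, eta, c.
Qed.
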